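(* Let $\mathbb{K}$ be a field of characteristic $0$. For a positive integer $r$, let $\mu(r)$ be the least integer $h$ such that $(1,r,h,r,1)$ is the Hilbert function of a standard graded Artinian Gorenstein $\mathbb{K}$-algebra, and let $\delta(r)=r-\mu(r)$. Then for every integer $m\geq 3$, \[\delta\!\left(m+\binom{m+2}{3}\right)\geq\binom{m}{3}.\]
   Context: Standard graded Artinian Gorenstein algebras $Q/I$ are taken with $I$ containing no linear forms, so the codimension equals $h_1$. *)

From HB Require Import structures.
From mathcomp Require Import all_boot all_order all_algebra.
From mathcomp Require Import mpoly.
Set Implicit Arguments. Unset Strict Implicit. Unset Printing Implicit Defensive.
Import GRing.Theory.
Local Open Scope ring_scope.

Definition lincomb (K : fieldType) (n k : nat) (c : 'I_k -> K)
  (s : 'I_k -> {mpoly K[n]}) : {mpoly K[n]} :=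
  \sum_(i < k) c i *: s i.

(* quotdim S I k : the K-vector space S / (S ∩ I) has dimension k,
   i.e. it has a basis given by the classes of k elements of S. *)
Definition quotdim (K : fieldType) (n : nat) (S I : {mpoly K[n]} -> Prop)
  (k : nat) : Prop :=
  exists s : 'I_k -> {mpoly K[n]},
    (forall i, S (s i)) /\
    (forall c : 'I_k -> K, I (lincomb c s) -> forall i, c i = 0) /\
    (forall p, S p -> exists c : 'I_k -> K, I (p - lincomb c s)).

Definition is_ideal (K : fieldType) (n : nat) (I : {mpoly K[n]} -> Prop) :=
  I 0 /\ (forall p q, I p -> I q -> I (p + q)) /\
  (forall a p, I p -> I (a * p)).

Definition homogeneous_ideal (K : fieldType) (n : nat)
  (I : {mpoly K[n]} -> Prop) :=
  forall p, I p -> forall d, I (pihomog mdeg d p).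

Definition degpart (K : fieldType) (n d : nat) : {mpoly K[n]} -> Prop :=
  fun p => p \is d.-homog.

Definition hilbert_at (K : fieldType) (n : nat) (I : {mpoly K[n]} -> Prop)
  (d k : nat) : Prop := @quotdim K n (@degpart K n d) I k.

(* preimage in Q of the socle 0 :_{Q/I} m of Q/I, m = (x_0,...,x_{n-1}) *)
Definition socle_pre (K : fieldType) (n : nat) (I : {mpoly K[n]} -> Prop)
  : {mpoly K[n]} -> Prop :=
  fun f => forall j : 'I_n, I ('X_j * f).

Definition AG_hilb_1rhr1 (K : fieldType) (r h : nat) : Prop :=
  exists I : {mpoly K[r]} -> Prop,
    is_ideal I /\ homogeneous_ideal I /\
    hilbert_at I 0 1 /\ hilbert_at I 1 r /\ hilbert_at I 2 h /\
    hilbert_at I 3 r /\ hilbert_at I 4 1 /\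
    (forall d, (5 <= d)%N -> hilbert_at I d 0) /\
    (* Gorenstein: the socle of Q/I is one-dimensional *)
    quotdim (socle_pre I) I 1.

Definition is_mu (K : fieldType) (r h : nat) : Prop :=
  AG_hilb_1rhr1 K r h /\ (forall h', AG_hilb_1rhr1 K r h' -> (h <= h')%N).

From HB Require Import structures.
From mathcomp Require Import all_boot all_order all_algebra.
From mathcomp Require Import mpoly.
From Stdlib Require Import Classical Wf_nat.
From mathcomp Require Import zify ring.
Set Implicit Arguments. Unset Strict Implicit. Unset Printing Implicit Defensive.
Import GRing.Theory.
Local Open Scope ring_scope.

(* Take variables x_1..x_m and one variable y_l for each cubic monomial M_l in
   x, so that r = m + C(m+2,3), and let F = \sum_l y_l M_l act on Q by
   contraction.  Q / Ann F is Artinian Gorenstein of socle degree 4 with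
   h_1 = h_3 = r, because every variable has a dual cubic monomial
   (x_a <-> y_(x_a^3) x_a^2 and y_l <-> M_l).  In degree 2, x_a x_b contracts F
   to a quadric in x and x_a y_l contracts it to M_l / x_a or to 0, so
   h_2 <= 2 C(m+1,2) and delta(r) >= m + C(m+2,3) - 2 C(m+1,2) = C(m,3).
   Contraction instead of differentiation makes the argument characteristic
   free. *)

Section SpanModulo.
Variables (K : fieldType) (n : nat) (I : {mpoly K[n]} -> Prop).
Hypotheses (ID : forall p q, I p -> I q -> I (p + q))
  (IZ : forall a p, I p -> I (a *: p)).

Definition span_mod k (t : 'I_k -> {mpoly K[n]}) p :=
  exists c, I (p - lincomb c t).

Lemma lincomb0 k (t : 'I_k -> {mpoly K[n]}) : lincomb (fun=> 0) t = 0.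
Proof. by rewrite /lincomb big1 // => j _; rewrite scale0r. Qed.

Lemma lincomb_delta k (t : 'I_k -> {mpoly K[n]}) j :
  lincomb (fun i => (i == j)%:R) t = t j.
Proof.
rewrite /lincomb (bigD1 j) //= eqxx scale1r big1 ?addr0 // => i /negbTE ->.
by rewrite scale0r.
Qed.

Lemma lincombD k (t : 'I_k -> {mpoly K[n]}) c1 c2 :
  lincomb (fun j => c1 j + c2 j) t = lincomb c1 t + lincomb c2 t.
Proof.
by rewrite /lincomb -big_split; apply: eq_bigr => j _; rewrite scalerDl.
Qed.

Lemma lincombZ k (t : 'I_k -> {mpoly K[n]}) a c :
  lincomb (fun j => a * c j) t = a *: lincomb c t.
Proof.
by rewrite /lincomb scaler_sumr; apply: eq_bigr => j _; rewrite scalerA.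
Qed.

Lemma lincomb_lift k (t : 'I_k.+1 -> {mpoly K[n]}) c i :
  lincomb c t = c i *: t i + lincomb (c \o lift i) (t \o lift i).
Proof. exact: bigD1_ord. Qed.

Lemma span_modI k (t : 'I_k -> {mpoly K[n]}) p : I p -> span_mod t p.
Proof. by exists (fun=> 0); rewrite lincomb0 subr0. Qed.

Lemma span_modD k (t : 'I_k -> {mpoly K[n]}) p q :
  span_mod t p -> span_mod t q -> span_mod t (p + q).
Proof.
move=> [c1 Ip] [c2 Iq]; exists (fun j => c1 j + c2 j).
by rewrite lincombD opprD addrACA; apply: ID.
Qed.

Lemma span_modZ k (t : 'I_k -> {mpoly K[n]}) a p :
  span_mod t p -> span_mod t (a *: p).
Proof.
move=> [c Ip]; exists (fun j => a * c j).
by rewrite lincombZ -scalerBr; apply: IZ.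
Qed.

Lemma span_mod_drop k (t : 'I_k.+1 -> {mpoly K[n]}) c i :
  I (lincomb c t) -> c i != 0 ->
  forall p, span_mod t p -> span_mod (t \o lift i) p.
Proof.
move=> It ci p [c0 Ip]; pose a := - (c0 i / c i).
exists (fun j => a * c (lift i j) + c0 (lift i j)).
have -> : p - lincomb (fun j => a * c (lift i j) + c0 (lift i j)) (t \o lift i)
    = p - lincomb c0 t - a *: lincomb c t.
  rewrite lincombD lincombZ (lincomb_lift t c0 i) (lincomb_lift t c i).
  rewrite scalerDr scalerA [a * _]mulNr divfK // !scaleNr.
  by move: (lincomb _ _) (_ *: lincomb _ _) (c0 i *: t i) => A B C /=; ring.
by rewrite -scaleNr; apply: ID Ip (IZ _ It).
Qed.

Lemma quotdim_spanning (S : {mpoly K[n]} -> Prop) k (t : 'I_k -> {mpoly K[n]}) :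
  (forall j, S (t j)) -> (forall p, S p -> span_mod t p) ->
  exists2 k', (k' <= k)%N & quotdim S I k'.
Proof.
elim: k t => [|k IHk] t St spanS.
  by exists 0%N => //; exists t; split => //; split => [c _ []|].
have [free|] := classic (forall c, I (lincomb c t) -> forall i, c i = 0).
  by exists k.+1 => //; exists t.
move=> /not_all_ex_not [c /not_all_ex_not [It /not_all_ex_not [i /eqP ci]]].
have [k' le_k'k dimS] := IHk (t \o lift i) (fun j => St _) (fun p Sp =>
  span_mod_drop It ci (spanS p Sp)).
by exists k' => //; apply: leqW.
Qed.

End SpanModulo.

Lemma mnm_addU n (w : 'X_{1..n}) : w != 0%MM -> exists j w', w = (U_(j) + w')%MM.
Proof.
move=> w0; have [j wj|wN0] := pickP (fun j => w j != 0%N).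
  by exists j, (w - U_(j))%MM; rewrite addmC submK // lep1mP.
case/eqP: w0; apply/mnmP => j; rewrite mnm0E.
by move: (wN0 j) => /= /negbFE /eqP.
Qed.

Lemma mulmn2D_eq3 n (a b : 'I_n) :
  ((U_(a) *+ 2 + U_(b))%MM == (U_(a) *+ 3)%MM) = (a == b).
Proof.
apply/eqP/eqP => [/mnmP /(_ b)|->].
  by rewrite mnmDE !mulmnE !mnm1E eqxx; case: eqP => //= _; lia.
by apply/mnmP => t; rewrite mnmDE !mulmnE; lia.
Qed.

Lemma mdeg0_eq n (v : 'X_{1..n}) : mdeg v = 0%N -> v = 0%MM.
Proof. by move/eqP; rewrite mdeg_eq0 => /eqP. Qed.

Lemma mdeg1_eq n (v : 'X_{1..n}) : mdeg v = 1%N -> exists j, v = U_(j)%MM.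
Proof. by move/eqP/mdeg1P => [j /eqP ->]; exists j. Qed.

Section Apolarity.
Variables (K : fieldType) (n : nat) (s : seq 'X_{1..n}) (d : nat).
Hypotheses (s_uniq : uniq s) (s_homog : {in s, forall u, mdeg u = d}).

(* [apolar g] is the constant term of the contraction of F = \sum_(u <- s) 'X_[u]
   by g, so that [Ann] is the annihilator ideal of F. *)
Definition apolar (g : {mpoly K[n]}) : K := \sum_(u <- s) g@_u.

Lemma apolar_is_linear : scalar apolar.
Proof.
move=> a p q; rewrite /apolar mulr_sumr -big_split /=.
by apply: eq_bigr => u _; rewrite mcoeffD mcoeffZ.
Qed.

HB.instance Definition _ :=
  GRing.isLinear.Build K {mpoly K[n]} K _ apolar apolar_is_linear.

Lemma apolarX v : apolar 'X_[v] = (v \in s)%:R.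
Proof.
rewrite /apolar; under eq_bigr do rewrite mcoeffX.
have [vs|vNs] := boolP (v \in s); last first.
  by rewrite big1_seq // => u /= us; case: eqP vNs => // ->; rewrite us.
rewrite (bigD1_seq v) //= eqxx big1 ?addr0 // => u.
by rewrite eq_sym => /negbTE ->.
Qed.

Lemma apolarXX w v : apolar ('X_[w] * 'X_[v]) = ((w + v)%MM \in s)%:R.
Proof. by rewrite -mpolyXD apolarX. Qed.

Lemma apolar_homog e g : g \is e.-homog -> e != d -> apolar g = 0.
Proof.
move=> ge ed; rewrite /apolar big1_seq // => u /= us.
by apply: (dhomog_nemf_coeff ge); rewrite /= s_homog // eq_sym.
Qed.

Definition Ann (p : {mpoly K[n]}) : Prop := forall q, apolar (q * p) = 0.

Lemma Ann_monomial p : (forall w, apolar ('X_[w] * p) = 0) -> Ann p.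
Proof.
move=> Xp q; rewrite (mpolyE q) mulr_suml raddf_sum /= big1 // => w _.
by rewrite -scalerAl linearZ /= Xp mulr0.
Qed.

Lemma Ann0 : Ann 0.
Proof. by move=> q; rewrite mulr0 raddf0. Qed.

Lemma AnnD p q : Ann p -> Ann q -> Ann (p + q).
Proof. by move=> Ap Aq r; rewrite mulrDr raddfD /= Ap Aq addr0. Qed.

Lemma AnnZ a p : Ann p -> Ann (a *: p).
Proof. by move=> Ap q; rewrite -scalerAr linearZ /= Ap mulr0. Qed.

Lemma AnnM a p : Ann p -> Ann (a * p).
Proof. by move=> Ap q; rewrite mulrA Ap. Qed.

Lemma is_ideal_Ann : is_ideal Ann.
Proof. by split; [exact: Ann0 | split; [exact: AnnD | exact: AnnM]]. Qed.

Lemma homogeneous_ideal_Ann : homogeneous_ideal Ann.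
Proof.
move=> p Ap e; apply: Ann_monomial => w.
have homXw f : 'X_[w] * pihomog mdeg f p \is (mdeg w + f).-homog.
  by apply: dhomogM; [rewrite dhomogX | apply: pihomogP].
have [we_d|] := eqVneq (mdeg w + e)%N d; last exact: apolar_homog.
pose k := maxn (mmeasure mdeg p) e.+1.
have ek : (e < k)%N by rewrite leq_maxr.
have := Ap 'X_[w]; rewrite {1}(pihomog_partitionE (k := k) (leq_maxl _ _)).
rewrite mulr_sumr raddf_sum /= (bigD1 (Ordinal ek)) //= big1 ?addr0 // => f fe.
apply: apolar_homog (homXw f) _; rewrite -we_d eqn_add2l.
by apply: contra fe => /eqP fe; apply/eqP/val_inj.
Qed.

Lemma mdeg_notin_s v : mdeg v != d -> (v \in s) = false.
Proof. by apply: contraNF => vs; rewrite s_homog. Qed.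

Definition monos k (b : 'I_k -> 'X_{1..n}) : 'I_k -> {mpoly K[n]} :=
  fun j => 'X_[b j].

Lemma apolar_lincomb w k c (b : 'I_k -> 'X_{1..n}) :
  apolar ('X_[w] * lincomb c (monos b)) =
  \sum_(j < k) c j * ((w + b j)%MM \in s)%:R.
Proof.
rewrite /lincomb mulr_sumr raddf_sum /=; apply: eq_bigr => j _.
by rewrite -scalerAr linearZ /= apolarXX.
Qed.

Definition contracts_to_zero u := forall w, (w + u)%MM \notin s.

Definition same_contraction u v :=
  forall w, ((w + u)%MM \in s) = ((w + v)%MM \in s).

Lemma Ann_X u : contracts_to_zero u -> Ann 'X_[u].
Proof.
by move=> u0; apply: Ann_monomial => w; rewrite apolarXX (negbTE (u0 w)).
Qed.

Lemma Ann_XB u v : same_contraction u v -> Ann ('X_[u] - 'X_[v]).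
Proof.
move=> uv; apply: Ann_monomial => w.
by rewrite mulrBr raddfB /= !apolarXX uv subrr.
Qed.

Definition dual_pair k (w b : 'I_k -> 'X_{1..n}) :=
  forall i j, ((w i + b j)%MM \in s) = (i == j).

Lemma dual_pairC k (w b : 'I_k -> 'X_{1..n}) : dual_pair w b -> dual_pair b w.
Proof. by move=> wb i j; rewrite addmC wb eq_sym. Qed.

Lemma dual_pair_free k (w b : 'I_k -> 'X_{1..n}) c :
  dual_pair w b -> Ann (lincomb c (monos b)) -> forall i, c i = 0.
Proof.
move=> wb Ac i; have := Ac 'X_[w i]; rewrite apolar_lincomb (bigD1 i) //=.
rewrite wb eqxx mulr1 big1 ?addr0 // => j ji.
by rewrite wb eq_sym (negbTE ji) mulr0.
Qed.

Lemma span_mod_homog e k (t : 'I_k -> {mpoly K[n]}) :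
  (forall u, mdeg u = e -> span_mod Ann t 'X_[u]) ->
  forall p, p \is e.-homog -> span_mod Ann t p.
Proof.
move=> spanX p pe; rewrite (mpolyE p) big_seq.
apply: big_ind => [|q r|u up]; first exact/span_modI/Ann0.
  by move=> sq sr; apply: (span_modD (@AnnD) sq sr).
by apply/span_modZ/spanX; [exact: AnnZ | exact: (dhomog_mf pe)].
Qed.

Lemma span_mod_contractions e k (t : 'I_k -> 'X_{1..n}) :
  (forall u, mdeg u = e ->
     contracts_to_zero u \/ exists j, same_contraction u (t j)) ->
  forall p, p \is e.-homog -> span_mod Ann (monos t) p.
Proof.
move=> cover; apply: span_mod_homog => u /cover [u0|[j uj]].
  exact/span_modI/Ann_X.
by exists (fun i => (i == j)%:R); rewrite lincomb_delta; apply: Ann_XB.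
Qed.

Lemma span_mod_codual e k (w b : 'I_k -> 'X_{1..n}) :
  dual_pair w b -> (forall j, mdeg (b j) = e) ->
  (forall v, (mdeg v + e)%N = d -> exists i, v = w i) ->
  forall p, p \is e.-homog -> span_mod Ann (monos b) p.
Proof.
move=> wb be cover; apply: span_mod_homog => u ue.
exists (fun i => ((w i + u)%MM \in s)%:R); apply: Ann_monomial => v.
rewrite mulrBr raddfB /= apolarXX apolar_lincomb.
have [/cover [i ->]|vd] := eqVneq (mdeg v + e)%N d.
  rewrite (bigD1 i) //= wb eqxx mulr1 big1 ?addr0 ?subrr // => j ji.
  by rewrite wb eq_sym (negbTE ji) mulr0.
rewrite mdeg_notin_s ?mdegD ?ue // big1 ?subr0 // => j _.
by rewrite mdeg_notin_s ?mulr0 // mdegD be.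
Qed.

Lemma hilbert_Ann_dual e k (w b : 'I_k -> 'X_{1..n}) :
  dual_pair w b -> (forall j, mdeg (b j) = e) ->
  (forall p, p \is e.-homog -> span_mod Ann (monos b) p) ->
  hilbert_at Ann e k.
Proof.
move=> wb be spanb; exists (monos b); split; last split => //.
  by move=> j; rewrite /degpart /monos dhomogX /= be.
by move=> c; apply: dual_pair_free.
Qed.

Lemma hilbert_Ann_basis e k (w b : 'I_k -> 'X_{1..n}) :
  dual_pair w b -> (forall j, mdeg (b j) = e) ->
  (forall u, mdeg u = e -> exists j, u = b j) ->
  hilbert_at Ann e k.
Proof.
move=> wb be cover; apply: hilbert_Ann_dual wb be _.
by apply: span_mod_contractions => u /cover [j ->]; right; exists j.
Qed.

Lemma hilbert_Ann_cobasis e k (w b : 'I_k -> 'X_{1..n}) :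
  dual_pair w b -> (forall j, mdeg (b j) = e) ->
  (forall v, (mdeg v + e)%N = d -> exists i, v = w i) ->
  hilbert_at Ann e k.
Proof.
move=> wb be cover.
by apply: hilbert_Ann_dual wb be (span_mod_codual wb be cover).
Qed.

Lemma hilbert_Ann_le e k (t : 'I_k -> 'X_{1..n}) :
  (forall j, mdeg (t j) = e) ->
  (forall u, mdeg u = e ->
     contracts_to_zero u \/ exists j, same_contraction u (t j)) ->
  exists2 h, (h <= k)%N & hilbert_at Ann e h.
Proof.
move=> te cover; apply: (@quotdim_spanning _ _ _ (@AnnD) (@AnnZ) _ _ (monos t)).
- by move=> j; rewrite /degpart /monos dhomogX /= te.
- exact: span_mod_contractions.
Qed.

Lemma hilbert_Ann_gt e : (d < e)%N -> hilbert_at Ann e 0.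
Proof.
move=> de; exists (fun=> 0); split; first by case.
split; first by move=> c _ [].
move=> p pe; apply: span_modI; apply: Ann_monomial => w.
apply: (apolar_homog (e := (mdeg w + e)%N)).
  by apply: dhomogM => //; rewrite dhomogX.
by rewrite gtn_eqF // (leq_trans de) ?leq_addl.
Qed.

Lemma socle_Ann u0 : u0 \in s -> quotdim (socle_pre Ann) Ann 1.
Proof.
move=> u0s; exists (fun=> 'X_[u0]); split; last split.
- move=> _ j; rewrite -mpolyXD; apply: Ann_X => w.
  by rewrite mdeg_notin_s // !mdegD mdeg1 (s_homog u0s); lia.
- move=> c; apply: (dual_pair_free (w := fun=> 0%MM) (b := fun=> u0)).
  by move=> i j; rewrite !ord1 add0m u0s.
- move=> f sf; exists (fun=> apolar f); apply: Ann_monomial => w.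
  rewrite /lincomb big_ord1 mulrBr raddfB /= -scalerAr linearZ /= apolarXX.
  have [->|/mnm_addU [j [w' ->]]] := eqVneq w 0%MM.
    by rewrite mpolyX0 mul1r add0m u0s mulr1 subrr.
  rewrite mdeg_notin_s ?mulr0 ?subr0; last first.
    by rewrite !mdegD mdeg1 (s_homog u0s); lia.
  by rewrite mpolyXD [_ * 'X_[w']]mulrC -mulrA; apply: sf.
Qed.

End Apolarity.

Theorem AG_hilb_1rhr1_Ann (K : fieldType) n (s : seq 'X_{1..n}) u0
    (w : 'I_n -> 'X_{1..n}) k (t : 'I_k -> 'X_{1..n}) :
  uniq s -> {in s, forall u, mdeg u = 4%N} -> u0 \in s ->
  (forall i, mdeg (w i) = 3%N) -> dual_pair s w (fun j => U_(j)%MM) ->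
  (forall j, mdeg (t j) = 2%N) ->
  (forall u, mdeg u = 2%N ->
     contracts_to_zero s u \/ exists j, same_contraction s u (t j)) ->
  exists2 h, (h <= k)%N & AG_hilb_1rhr1 K n h.
Proof.
move=> s_uniq s_homog u0s w3 wU t2 cover2.
have [h hk hilb2] := hilbert_Ann_le K s_uniq t2 cover2.
have u0_dual : dual_pair s (fun _ : 'I_1 => u0) (fun=> 0%MM).
  by move=> i j; rewrite !ord1 addm0 u0s.
exists h => //; exists (Ann s).
split; first exact: is_ideal_Ann.
split; first exact: homogeneous_ideal_Ann s_homog.
do !split.
- apply: (hilbert_Ann_basis K s_uniq u0_dual) => [_|u /mdeg0_eq ->].
    exact: mdeg0.
  by exists ord0.
- apply: (hilbert_Ann_basis K s_uniq wU) => [j|]; first exact: mdeg1.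
  exact: mdeg1_eq.
- exact: hilb2.
- apply: (hilbert_Ann_cobasis K s_uniq s_homog (dual_pairC wU) w3) => v v3.
  by apply: mdeg1_eq; lia.
- apply: (hilbert_Ann_cobasis K s_uniq s_homog (dual_pairC u0_dual)) => [_|v v4].
    exact: s_homog.
  by exists ord0; apply: mdeg0_eq; lia.
- by move=> e e5; exact: (hilbert_Ann_gt K s_homog e5).
- exact: (socle_Ann K s_uniq s_homog u0s).
Qed.

Section MonomialEnumeration.
Variables (m' e : nat).

Definition monos_of_deg : seq 'X_{1..m'.+1} :=
  [seq s2m t | t : e.-tuple 'I_m'.+1 <- enum (basis m'.+1 e)].

Definition mono_of_deg (k : 'I_('C(e + m', e))) : 'X_{1..m'.+1} :=
  nth 0%MM monos_of_deg k.

Lemma size_monos_of_deg : size monos_of_deg = 'C(e + m', e).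
Proof. exact: size_basis. Qed.

Lemma mdeg_mono_of_deg k : mdeg (mono_of_deg k) = e.
Proof. by apply/eqP; rewrite basis_cover mem_nth // size_monos_of_deg. Qed.

Lemma mono_of_deg_inj : injective mono_of_deg.
Proof.
move=> k1 k2 /eqP; rewrite nth_uniq ?size_monos_of_deg //; last exact: uniq_basis.
by move/eqP/val_inj.
Qed.

Lemma mono_of_degP v : mdeg v = e -> exists k, mono_of_deg k = v.
Proof.
move=> /eqP; rewrite basis_cover -/monos_of_deg => vP.
have vk : (index v monos_of_deg < 'C(e + m', e))%N.
  by rewrite -size_monos_of_deg index_mem.
by exists (Ordinal vk); rewrite /mono_of_deg nth_index.
Qed.

End MonomialEnumeration.

Arguments mono_of_deg_inj {m' e} _ _ _.

Section TwoBlocksOfVariables.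
Variables (m N : nat).
Local Notation r := (m + N)%N.

Definition xvar (i : 'I_m) : 'I_r := lshift N i.
Definition yvar (k : 'I_N) : 'I_r := rshift m k.

Definition xlift (b : 'X_{1..m}) : 'X_{1..r} :=
  [multinom if split j is inl i then b i else 0%N | j < r].

Definition ydeg (v : 'X_{1..r}) : nat := (\sum_(k < N) v (yvar k))%N.

Lemma xvar_inj : injective xvar. Proof. exact: lshift_inj. Qed.
Lemma yvar_inj : injective yvar. Proof. exact: rshift_inj. Qed.

Lemma xvar_neq_yvar i k : (xvar i == yvar k) = false.
Proof.
apply/negbTE/eqP => /(congr1 val) /= ik.
by move: (ltn_ord i); rewrite ik ltnNge leq_addr.
Qed.

Lemma xliftE b i : xlift b (xvar i) = b i.
Proof. by rewrite mnmE (unsplitK (inl _ i)). Qed.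

Lemma xlift_yvar b k : xlift b (yvar k) = 0%N.
Proof. by rewrite mnmE (unsplitK (inr _ k)). Qed.

Lemma U_xvar i j : U_(xvar i)%MM (xvar j) = (i == j) :> nat.
Proof. by rewrite mnm1E (inj_eq xvar_inj). Qed.

Lemma U_xvar_yvar i k : U_(xvar i)%MM (yvar k) = 0%N.
Proof. by rewrite mnm1E xvar_neq_yvar. Qed.

Lemma U_yvar_xvar k i : U_(yvar k)%MM (xvar i) = 0%N.
Proof. by rewrite mnm1E eq_sym xvar_neq_yvar. Qed.

Lemma U_yvar k l : U_(yvar k)%MM (yvar l) = (k == l) :> nat.
Proof. by rewrite mnm1E (inj_eq yvar_inj). Qed.

Lemma mnm_xyP (v1 v2 : 'X_{1..r}) :
  (forall i, v1 (xvar i) = v2 (xvar i)) ->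
  (forall k, v1 (yvar k) = v2 (yvar k)) ->
  v1 = v2.
Proof.
move=> ex ey; apply/mnmP => j.
by case: (split_ordP j) => [i ->|k ->]; [apply: ex | apply: ey].
Qed.

Lemma xliftD a b : xlift (a + b)%MM = (xlift a + xlift b)%MM.
Proof. by apply: mnm_xyP => *; rewrite !(mnmDE, xliftE, xlift_yvar). Qed.

Lemma xliftU i : xlift U_(i)%MM = U_(xvar i)%MM.
Proof.
by apply: mnm_xyP => *; rewrite ?(xliftE, xlift_yvar, U_xvar, U_xvar_yvar, mnm1E).
Qed.

Lemma xlift_inj : injective xlift.
Proof. by move=> a b ab; apply/mnmP => i; rewrite -!xliftE ab. Qed.

Lemma mdeg_xlift b : mdeg (xlift b) = mdeg b.
Proof.
rewrite !mdegE big_split_ord /= [X in (_ + X)%N]big1 ?addn0 => [|k _]; last first.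
  exact: xlift_yvar.
by apply: eq_bigr => i _; rewrite -[lshift _ _]/(xvar i) xliftE.
Qed.

Lemma ydegD a b : ydeg (a + b)%MM = (ydeg a + ydeg b)%N.
Proof. by rewrite /ydeg -big_split; apply: eq_bigr => k _; rewrite mnmDE. Qed.

Lemma ydeg_xvar i : ydeg U_(xvar i)%MM = 0%N.
Proof. by rewrite /ydeg big1 // => k _; rewrite U_xvar_yvar. Qed.

Lemma ydeg_yvar k : ydeg U_(yvar k)%MM = 1%N.
Proof.
rewrite /ydeg (bigD1 k) //= U_yvar eqxx big1 // => l lk.
by rewrite U_yvar eq_sym (negbTE lk).
Qed.

Lemma ydeg_xlift b : ydeg (xlift b) = 0%N.
Proof. by rewrite /ydeg big1 // => k _; rewrite xlift_yvar. Qed.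

End TwoBlocksOfVariables.

Arguments xvar_inj {m N} _ _ _.
Arguments yvar_inj {m N} _ _ _.
Arguments xlift_inj {m N} _ _ _.

Local Notation coordE := (mnmDE, mulmnE, mnm0E, xliftE, xlift_yvar,
  U_xvar, U_xvar_yvar, U_yvar_xvar, U_yvar).

Section DualGenerator.
Variable m' : nat.
Local Notation m := m'.+1.
Local Notation N := 'C(3 + m', 3).
Local Notation N2 := 'C(2 + m', 2).
Local Notation r := (m + N)%N.
Local Notation xvar := (@xvar m N).
Local Notation yvar := (@yvar m N).
Local Notation xlift := (@xlift m N).

Definition cubic : 'I_N -> 'X_{1..m} := @mono_of_deg m' 3.
Definition quadric : 'I_N2 -> 'X_{1..m} := @mono_of_deg m' 2.

(* The monomials of the dual generator F = \sum_l y_l * cubic l (x). *)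
Definition F_supp : seq 'X_{1..r} :=
  [seq (U_(yvar l) + xlift (cubic l))%MM | l <- enum 'I_N].

Lemma F_supp_uniq : uniq F_supp.
Proof.
rewrite map_inj_uniq ?enum_uniq // => l1 l2 /mnmP /(_ (yvar l1)).
by rewrite !coordE eqxx; case: eqVneq.
Qed.

Lemma mdeg_F_supp : {in F_supp, forall u, mdeg u = 4%N}.
Proof.
move=> _ /mapP [l _ ->].
by rewrite mdegD mdeg1 mdeg_xlift /cubic mdeg_mono_of_deg.
Qed.

Lemma ydeg_F_supp v : ydeg v != 1%N -> (v \in F_supp) = false.
Proof.
apply: contraNF => /mapP [l _ ->].
by rewrite ydegD ydeg_yvar ydeg_xlift.
Qed.

Lemma mem_F_supp_yvar v k :
  ((v + U_(yvar k))%MM \in F_supp) = (v == xlift (cubic k)).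
Proof.
apply/mapP/eqP => [[l _ /mnmP vk]|->]; last first.
  by exists k; rewrite ?mem_enum // addmC.
have kl : k = l.
  by move: (vk (yvar k)); rewrite !coordE eqxx addn1; case: eqVneq.
by subst l; apply/eqP; rewrite -(eqm_add2l U_(yvar k)%MM) addmC; apply/eqP/mnmP.
Qed.

Variable cube : 'I_m -> 'I_N.
Hypothesis cubeE : forall a, cubic (cube a) = (U_(a) *+ 3)%MM.

Definition dual_linear (j : 'I_r) : 'X_{1..r} :=
  match split j with
  | inl a => (U_(yvar (cube a)) + xlift (U_(a) *+ 2))%MM
  | inr k => xlift (cubic k)
  end.

Lemma dual_linear_xvar a :
  dual_linear (xvar a) = (U_(yvar (cube a)) + xlift (U_(a) *+ 2))%MM.
Proof. by rewrite /dual_linear (unsplitK (inl _ a)). Qed.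

Lemma dual_linear_yvar k : dual_linear (yvar k) = xlift (cubic k).
Proof. by rewrite /dual_linear (unsplitK (inr _ k)). Qed.

Lemma mdeg_dual_linear j : mdeg (dual_linear j) = 3%N.
Proof.
case: (split_ordP j) => [a|k] ->.
  rewrite [lshift _ _]/(xvar a) dual_linear_xvar.
  by rewrite mdegD mdeg1 mdeg_xlift mdegMn mdeg1.
rewrite [rshift _ _]/(yvar k) dual_linear_yvar.
by rewrite mdeg_xlift /cubic mdeg_mono_of_deg.
Qed.

Lemma dual_pair_linear : dual_pair F_supp dual_linear (fun j => U_(j)%MM).
Proof.
move=> i j; case: (split_ordP i) => [a|k] ->; case: (split_ordP j) => [b|l] ->;
  rewrite -?[lshift _ _]/(xvar _) -?[rshift _ _]/(yvar _)
    ?dual_linear_xvar ?dual_linear_yvar.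
- have -> : (U_(yvar (cube a)) + xlift (U_(a) *+ 2) + U_(xvar b))%MM =
            (xlift (U_(a) *+ 2 + U_(b)) + U_(yvar (cube a)))%MM.
    by apply: mnm_xyP => *; rewrite !coordE ?mnm1E; lia.
  rewrite mem_F_supp_yvar (inj_eq xlift_inj) cubeE mulmn2D_eq3.
  by rewrite (inj_eq xvar_inj).
- by rewrite xvar_neq_yvar ydeg_F_supp // !ydegD ydeg_xlift !ydeg_yvar.
- by rewrite eq_sym xvar_neq_yvar ydeg_F_supp // ydegD ydeg_xlift ydeg_xvar.
- rewrite mem_F_supp_yvar (inj_eq xlift_inj) (inj_eq mono_of_deg_inj).
  by rewrite (inj_eq yvar_inj).
Qed.

Lemma mem_F_supp_xy w a k b : cubic k = (U_(a) + b)%MM ->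
  ((w + (U_(xvar a) + U_(yvar k)))%MM \in F_supp) = (w == xlift b).
Proof.
move=> kab; rewrite addmA mem_F_supp_yvar kab xliftD xliftU.
by rewrite [(w + _)%MM]addmC eqm_add2l.
Qed.

Lemma mem_F_supp_xy0 w a k : cubic k a = 0%N ->
  ((w + (U_(xvar a) + U_(yvar k)))%MM \in F_supp) = false.
Proof.
move=> ka; rewrite addmA mem_F_supp_yvar; apply/eqP => /mnmP /(_ (xvar a)).
by rewrite !coordE eqxx ka addn1.
Qed.

Variable x0quad : 'I_N2 -> 'I_N.
Hypothesis x0quadE : forall q, cubic (x0quad q) = (U_(ord0) + quadric q)%MM.

(* The contraction of F by x_a y_k is the quadric cubic k / x_a (or 0), which
   is also the contraction by x_0 y_(x0quad q) for the right q. *)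
Definition quadric_reps (j : 'I_(N2 + N2)) : 'X_{1..r} :=
  match split j with
  | inl q => xlift (quadric q)
  | inr q => (U_(xvar ord0) + U_(yvar (x0quad q)))%MM
  end.

Lemma mdeg_quadric_reps j : mdeg (quadric_reps j) = 2%N.
Proof.
rewrite /quadric_reps; case: (split j) => q; last by rewrite mdegD !mdeg1.
by rewrite mdeg_xlift /quadric mdeg_mono_of_deg.
Qed.

Lemma quadric_reps_cover_xy a k :
  contracts_to_zero F_supp (U_(xvar a) + U_(yvar k))%MM \/
  exists j, same_contraction F_supp (U_(xvar a) + U_(yvar k))%MM (quadric_reps j).
Proof.
have [ka|ka] := eqVneq (cubic k a) 0%N.
  by left => w; rewrite mem_F_supp_xy0.
right; pose b := (cubic k - U_(a))%MM.
have kab : cubic k = (U_(a) + b)%MM by rewrite addmC submK // lep1mP.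
have [q qb] : exists q, quadric q = b.
  apply: mono_of_degP; have := @mdeg_mono_of_deg m' 3 k.
  by rewrite -/(cubic k) kab mdegD mdeg1 => -[].
exists (rshift _ q) => w; rewrite /quadric_reps (unsplitK (inr _ q)).
by rewrite (mem_F_supp_xy _ kab) (mem_F_supp_xy _ (x0quadE q)) qb.
Qed.

Lemma quadric_reps_cover u : mdeg u = 2%N ->
  contracts_to_zero F_supp u \/
  exists j, same_contraction F_supp u (quadric_reps j).
Proof.
move=> u2; have [i [v uiv]] : exists i v, u = (U_(i) + v)%MM.
  by apply: mnm_addU; rewrite -mdeg_eq0 u2.
have [j vj] : exists j, v = U_(j)%MM.
  by apply: mdeg1_eq; move: u2; rewrite uiv mdegD mdeg1 => -[].
rewrite {}uiv {}vj {u2}.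
case: (split_ordP i) => [a|k] ->; case: (split_ordP j) => [b|l] ->;
  rewrite -?[lshift _ _]/(xvar _) -?[rshift _ _]/(yvar _).
- have [q qab] : exists q, quadric q = (U_(a) + U_(b))%MM.
    by apply: mono_of_degP; rewrite mdegD !mdeg1.
  right; exists (lshift _ q) => w.
  by rewrite /quadric_reps (unsplitK (inl _ q)) qab xliftD !xliftU.
- exact: quadric_reps_cover_xy.
- by rewrite addmC; apply: quadric_reps_cover_xy.
- by left => w; rewrite ydeg_F_supp // !ydegD !ydeg_yvar; lia.
Qed.

End DualGenerator.

Theorem AG_hilb_dual_generator (K : fieldType) m' :
  exists2 h, (h <= 'C(2 + m', 2) + 'C(2 + m', 2))%N &
    AG_hilb_1rhr1 K (m'.+1 + 'C(3 + m', 3)) h.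
Proof.
have [cube cubeE] : exists cube : 'I_m'.+1 -> 'I_('C(3 + m', 3)),
    forall a, cubic (cube a) = (U_(a) *+ 3)%MM.
  apply: (@fin_all_exists _ (fun=> 'I__) (fun a k => cubic k = _)) => a.
  by apply: mono_of_degP; rewrite mdegMn mdeg1.
have [x0quad x0quadE] : exists x0quad : 'I_('C(2 + m', 2)) -> 'I_('C(3 + m', 3)),
    forall q, cubic (x0quad q) = (U_(ord0) + quadric q)%MM.
  apply: (@fin_all_exists _ (fun=> 'I__) (fun q k => cubic k = _)) => q.
  by apply: mono_of_degP; rewrite mdegD mdeg1 /quadric mdeg_mono_of_deg.
have u0_F :
    (U_(yvar _ (cube ord0)) + xlift _ (cubic (cube ord0)))%MM \in F_supp m'.
  by apply: map_f; rewrite mem_enum.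
apply: (AG_hilb_1rhr1_Ann K (F_supp_uniq m') (@mdeg_F_supp m') u0_F
  (mdeg_dual_linear cube) (dual_pair_linear cubeE)
  (mdeg_quadric_reps x0quad) (quadric_reps_cover x0quadE)).
Qed.

Lemma is_mu_exists_le (K : fieldType) r h0 :
  AG_hilb_1rhr1 K r h0 -> exists2 h, is_mu K r h & (h <= h0)%N.
Proof.
move=> AGh0.
have [h [[AGh minh] _]] := dec_inh_nat_subset_has_unique_least_element _
  (fun h => classic (AG_hilb_1rhr1 K r h)) (ex_intro _ h0 AGh0).
have minh' h' : AG_hilb_1rhr1 K r h' -> (h <= h')%N by move/minh/leP.
by exists h; [split | apply: minh'].
Qed.

Lemma binom_count_cubics m :
  (m + 'C(m.+2, 3) = 'C(m, 3) + ('C(m.+1, 2) + 'C(m.+1, 2)))%N.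
Proof. by rewrite !binS bin1; lia. Qed.

Unset Implicit Arguments.
Theorem proposition3p4 (K : fieldType) (charK0 : [pchar K] =i pred0)
  (m : nat) (hm : (3 <= m)%N) :
  exists h : nat,
    is_mu K (m + 'C(m.+2, 3))%N h /\
    (Posz 'C(m, 3) <= Posz (m + 'C(m.+2, 3))%N - Posz h)%R.
Proof.
case: m hm => [//|m'] _.
have [h0 h0_le AGh0] := AG_hilb_dual_generator K m'.
have [h mu_h h_le] := is_mu_exists_le AGh0.
exists h; split => //.
rewrite Num.Theory.lerBrDr -PoszD lez_nat binom_count_cubics.
by move: h0_le; rewrite add2n; lia.
Qed.
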